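(* Let $\mathsf{M}$ be the subspace of $\ell_1$ with underlying set $\{x \in \prod_{i\in\mathbb{N}} M_i : \sum_{i\in\mathbb{N}} |x(i)| < \infty\}$, where $M_i = \{ j\cdot 2^{-i} \mid j \in \{0,\dots,2^i\}\}$. Then $\mathsf{M}$ is a Polish space that is not zero-dimensional and that does not satisfy Normann's condition.
   Context: $\ell_1$ is the set of real sequences $x$ with $\|x\|_1=\sum_{i}|x(i)|<\infty$, topologised by the metric $\|x-y\|_1$; $\mathsf{M}$ carries the subspace topology. A subset $A$ of a topological space $X$ is functionally closed if $A=\varphi^{-1}[\{0\}]$ for some continuous $\varphi\colon X\to[0,1]$. A space satisfies Normann's condition if every functionally closed subset is an intersection of clopen sets. *)

From HB Require Import structures.
From mathcomp Require Import all_boot all_order all_algebra.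
From mathcomp Require Import all_classical all_reals all_analysis.
Set Implicit Arguments. Unset Strict Implicit. Unset Printing Implicit Defensive.
Import Order.TTheory GRing.Theory Num.Theory numFieldNormedType.Exports.
Local Open Scope classical_set_scope.
Local Open Scope ring_scope.

Section Defs.
Variable R : realType.

Definition seqR := nat -> R.

Definition abs_summable (x : seqR) : Prop :=
  cvg (series (fun i => `|x i|) @ \oo).

Definition l1dist (x y : seqR) : R :=
  limn (series (fun i => `|x i - y i|)).

Definition Mi (i : nat) : set R :=
  [set r | exists j : nat, (j <= 2 ^ i)%N /\ r = j%:R / 2%:R ^+ i].

Definition Mset : set seqR :=
  [set x | (forall i, Mi i (x i)) /\ abs_summable x].

Definition open_in (S : set seqR) (d : seqR -> seqR -> R) (U : set seqR) :=
  U `<=` S /\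
  forall x, U x -> exists2 e : R, 0 < e & forall y, S y -> d x y < e -> U y.

Definition closed_in S d (A : set seqR) := A `<=` S /\ open_in S d (S `\` A).

Definition clopen_in S d (A : set seqR) := open_in S d A /\ closed_in S d A.

Definition metric_on (S : set seqR) (d : seqR -> seqR -> R) :=
  (forall x y, S x -> S y -> 0 <= d x y) /\
  (forall x y, S x -> S y -> d x y = 0 <-> x = y) /\
  (forall x y, S x -> S y -> d x y = d y x) /\
  (forall x y z, S x -> S y -> S z -> d x z <= d x y + d y z).

Definition complete_on (S : set seqR) (d : seqR -> seqR -> R) :=
  forall u : nat -> seqR, (forall n, S (u n)) ->
    (forall e : R, 0 < e -> exists N, forall m n, (N <= m)%N -> (N <= n)%N ->
       d (u m) (u n) < e) ->
    exists2 l, S l & forall e : R, 0 < e -> exists N, forall n, (N <= n)%N ->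
       d (u n) l < e.

Definition separable_in (S : set seqR) d :=
  exists2 D : set seqR, countable D /\ D `<=` S &
    forall U, open_in S d U -> U !=set0 -> (U `&` D) !=set0.

Definition completely_metrizable_in (S : set seqR) d :=
  exists d' : seqR -> seqR -> R, metric_on S d' /\ complete_on S d' /\
    forall U, open_in S d U <-> open_in S d' U.

Definition polish_in S d := separable_in S d /\ completely_metrizable_in S d.

Definition zero_dimensional_in S d :=
  forall U x, open_in S d U -> U x ->
    exists C, clopen_in S d C /\ C x /\ C `<=` U.

Definition continuous_on (S : set seqR) d (phi : seqR -> R) :=
  forall x, S x -> forall e : R, 0 < e ->
    exists2 delta : R, 0 < delta &
      forall y, S y -> d x y < delta -> `|phi y - phi x| < e.

Definition functionally_closed_in S d (A : set seqR) :=
  exists phi : seqR -> R, continuous_on S d phi /\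
    (forall x, S x -> 0 <= phi x <= 1) /\
    A = [set x | S x /\ phi x = 0].

(* Normann's condition: every functionally closed set is an intersection of
   clopen sets (the empty intersection being the whole space S) *)
Definition normann_condition_in S d :=
  forall A, functionally_closed_in S d A ->
    exists F : set (set seqR), (forall C, F C -> clopen_in S d C) /\
      A = S `&` \bigcap_(C in F) C.

End Defs.

From HB Require Import structures.
From mathcomp Require Import all_boot all_order all_algebra.
From mathcomp Require Import all_classical all_reals all_analysis.
From mathcomp Require Import lra.
Set Implicit Arguments. Unset Strict Implicit. Unset Printing Implicit Defensive.
Import Order.TTheory GRing.Theory Num.Theory numFieldNormedType.Exports.
Local Open Scope classical_set_scope.
Local Open Scope ring_scope.

(* In [M] the values of the i-th coordinate are 2^-i apart, so an
   l1-Cauchy sequence of [M] has eventually constant coordinates and converges in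
   [M]; finitely supported dyadic sequences form a countable dense set.  No clopen
   C with 0 in C lies inside the open unit ball B: starting from 0, raise the n-th
   coordinate by steps of 2^-n as long as one stays in C; this stops below 1
   because B contains no point with a coordinate equal to 1.  The limit of these
   points lies in C as C is closed, but every neighbourhood of it contains a
   one-step-too-far point outside C, so C is not open there.  Finally M \ B is the
   zero set of max(0, 1 - ||x||_1); if it were an intersection of clopen sets, one
   of them would miss 0, and its complement would be a clopen C as above. *)

Lemma last_true_before (P : nat -> Prop) m : P 0%N -> ~ P m ->
  exists j, [/\ (j < m)%N, P j & ~ P j.+1].
Proof.
elim: m => [//|m IHm] P0 NPm; case: (pselect (P m)) => [Pm|NPm']; first by exists m.
by have [j [jm Pj NPj]] := IHm P0 NPm'; exists j; split=> //; exact: ltnW.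
Qed.

Section L1Metric.
Variable R : realType.
Implicit Types (a b : nat -> R) (x y z : seqR R).
Local Notation d := (@l1dist R).

Lemma seriesE a n : series a n = \sum_(0 <= k < n) a k.
Proof. by []. Qed.

Lemma ler_series a b n : (forall i, a i <= b i) -> series a n <= series b n.
Proof. by move=> ab; rewrite !seriesE; apply: ler_sum => i _. Qed.

Lemma seriesD a b n : series (fun i => a i + b i) n = series a n + series b n.
Proof. by rewrite !seriesE big_split. Qed.

Lemma series_supported_le (t : nat -> R) n K :
  (forall i, i != n -> t i = 0) -> (forall i, 0 <= t i) -> series t K <= t n.
Proof.
move=> t0 t_ge0; rewrite seriesE; case: (ltnP n K) => [nK|Kn].
  by rewrite (bigD1_seq n) /= ?mem_index_iota ?nK ?iota_uniq // big1 ?addr0 // => i /t0.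
rewrite big1_seq // => i /[!mem_index_iota] /andP[_ iK]; apply: t0.
by rewrite ltn_eqF // (leq_trans iK Kn).
Qed.

Lemma ler_dist_max0 (a b : R) : `|Num.max 0 a - Num.max 0 b| <= `|a - b|.
Proof.
have := ler_norm (a - b); have := ler_norm (b - a); rewrite distrC !maxEle => ? ?.
by case: (leP 0 a) => ?; case: (leP 0 b) => ?; rewrite ler_norml; apply/andP; split; lra.
Qed.

Lemma limn_series_sub_lt a : cvgn (series a) -> forall e : R, 0 < e ->
  exists N, forall n, (N <= n)%N -> limn (series a) - series a n < e.
Proof.
move=> a_cvg e e0; have [N _ HN] := (cvgrPdist_lt _ _).1 a_cvg e e0.
by exists N => n Nn; apply: le_lt_trans (HN n Nn); exact: ler_norm.
Qed.

Section NonnegSeries.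
Variable a : nat -> R.
Hypothesis a_ge0 : forall i, 0 <= a i.

Lemma nondecreasing_series_ge0 : nondecreasing_seq (series a).
Proof. by apply: nondecreasing_series => i _ _; exact: a_ge0. Qed.

Lemma series_le_limn : cvgn (series a) -> forall n, series a n <= limn (series a).
Proof. by move=> a_cvg; apply: nondecreasing_cvgn_le => //; exact: nondecreasing_series_ge0. Qed.

Lemma cvgn_series_bounded B : (forall n, series a n <= B) -> cvgn (series a).
Proof.
move=> aB; apply: nondecreasing_is_cvgn; first exact: nondecreasing_series_ge0.
by exists B => _ [n _ <-].
Qed.

Lemma limn_series_le B : (forall n, series a n <= B) -> limn (series a) <= B.
Proof. by move=> aB; apply: limr_le; [exact: cvgn_series_bounded aB | exact: nearW]. Qed.

End NonnegSeries.

Lemma abs_summable_bounded x B :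
  (forall n, series (fun i => `|x i|) n <= B) -> abs_summable x.
Proof. exact/cvgn_series_bounded. Qed.

Lemma series_norm_le_limn x n : abs_summable x ->
  series (fun i => `|x i|) n <= limn (series (fun i => `|x i|)).
Proof. by move=> x_sum; exact: series_le_limn. Qed.

Lemma cvgn_series_dist x y : abs_summable x -> abs_summable y ->
  cvgn (series (fun i => `|x i - y i|)).
Proof.
move=> x_sum y_sum.
apply: (@cvgn_series_bounded _ (fun i => normr_ge0 _)
  (limn (series (fun i => `|x i|)) + limn (series (fun i => `|y i|)))) => n.
apply: le_trans (ler_series (b := fun i => `|x i| + `|y i|) _ (fun i => ler_normB _ _)) _.
by rewrite seriesD lerD // series_norm_le_limn.
Qed.

Lemma series_le_l1dist x y n : abs_summable x -> abs_summable y ->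
  series (fun i => `|x i - y i|) n <= d x y.
Proof. by move=> x_sum y_sum; apply: series_le_limn => //; exact: cvgn_series_dist. Qed.

Lemma l1dist_le x y B :
  (forall n, series (fun i => `|x i - y i|) n <= B) -> d x y <= B.
Proof. exact/limn_series_le. Qed.

Lemma coord_le_l1dist x y k : abs_summable x -> abs_summable y ->
  `|x k - y k| <= d x y.
Proof.
move=> x_sum y_sum; apply: le_trans (series_le_l1dist k.+1 x_sum y_sum).
by rewrite seriesE big_nat_recr //= lerDr sumr_ge0.
Qed.

Lemma l1dist_sym x y : d x y = d y x.
Proof.
rewrite /l1dist; congr (limn _); apply: funext => n.
by rewrite !seriesE; apply: eq_bigr => i _; rewrite distrC.
Qed.

Lemma l1dist_triangle x y z : abs_summable x -> abs_summable y -> abs_summable z ->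
  d x z <= d x y + d y z.
Proof.
move=> x_sum y_sum z_sum; apply: l1dist_le => n.
apply: le_trans (ler_series (b := fun i => `|x i - y i| + `|y i - z i|) _ _) _.
  by move=> i; rewrite -(subrKA (y i)) ler_normD.
by rewrite seriesD lerD // series_le_l1dist.
Qed.

Lemma l1dist_xx x : d x x = 0.
Proof.
rewrite /l1dist (_ : series _ = fun=> 0) ?lim_cst //.
by apply: funext => n; rewrite seriesE big1 // => i _; rewrite subrr normr0.
Qed.

Lemma l1dist_eq0 x y : abs_summable x -> abs_summable y -> d x y = 0 -> x = y.
Proof.
move=> x_sum y_sum dxy0; apply: funext => k; apply/eqP.
by rewrite -subr_eq0 -normr_le0 -dxy0 coord_le_l1dist.
Qed.

Lemma metric_on_l1dist S : S `<=` @abs_summable R -> metric_on S d.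
Proof.
move=> S_sum; split; [|split; [|split]].
- by move=> x y /S_sum x_sum /S_sum y_sum; apply: le_trans (coord_le_l1dist 0 x_sum y_sum).
- by move=> x y /S_sum ? /S_sum ?; split=> [|->]; [exact: l1dist_eq0 | exact: l1dist_xx].
- by move=> x y _ _; exact: l1dist_sym.
- by move=> x y z /S_sum ? /S_sum ? /S_sum ?; exact: l1dist_triangle.
Qed.

Lemma l1dist_lipschitz x y z : abs_summable x -> abs_summable y -> abs_summable z ->
  `|d z x - d z y| <= d x y.
Proof.
move=> x_sum y_sum z_sum; rewrite ler_norml.
have := l1dist_triangle z_sum x_sum y_sum; have := l1dist_triangle z_sum y_sum x_sum.
rewrite (l1dist_sym y x); lra.
Qed.

Definition seq0 : seqR R := fun=> 0.

Definition trunc n x : seqR R := fun i => if (i < n)%N then x i else 0.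

Lemma coord_le_l1dist0 x k : abs_summable x -> `|x k| <= d seq0 x.
Proof.
move=> x_sum; rewrite -normrN -sub0r.
by apply: coord_le_l1dist => //; apply: (@abs_summable_bounded _ 0) => n;
  rewrite seriesE big1 // => i _; rewrite normr0.
Qed.

Lemma abs_summable_finite_support x N :
  (forall i, (N <= i)%N -> x i = 0) -> abs_summable x.
Proof.
move=> x_supp; apply: (@abs_summable_bounded _ (series (fun i => `|x i|) N)) => K.
apply: le_trans (nondecreasing_series_ge0 (fun i => normr_ge0 (x i)) (leq_maxl K N)) _.
rewrite !seriesE (big_cat_nat (leq0n N) (leq_maxr K N)) /=.
rewrite [X in _ + X]big_nat [X in _ + X]big1 ?addr0 //.
by move=> i /andP[Ni _]; rewrite x_supp // normr0.
Qed.

Lemma l1dist_trunc_le x n : abs_summable x ->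
  d x (trunc n x) <= limn (series (fun i => `|x i|)) - series (fun i => `|x i|) n.
Proof.
move=> x_sum; apply: l1dist_le => K.
have trunc_dist i : `|x i - trunc n x i| = if (i < n)%N then 0 else `|x i|.
  by rewrite /trunc; case: ifP; rewrite ?subrr ?normr0 ?subr0.
apply: le_trans (nondecreasing_series_ge0 (fun i => normr_ge0 (x i - trunc n x i)) (leq_maxl K n)) _.
rewrite seriesE (big_cat_nat (leq0n n) (leq_maxr K n)) /= big_nat big1; last first.
  by move=> i /andP[_ ilt]; rewrite trunc_dist ilt.
rewrite add0r (_ : \sum_(n <= i < maxn K n) _ =
    series (fun i => `|x i|) (maxn K n) - series (fun i => `|x i|) n).
  by rewrite lerD2r series_norm_le_limn.
rewrite !seriesE (big_cat_nat (leq0n n) (leq_maxr K n)) /= addrAC subrr add0r.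
by apply: eq_big_nat => i /andP[ni _]; rewrite trunc_dist ltnNge ni.
Qed.

Lemma l1dist_trunc x : abs_summable x -> forall e : R, 0 < e ->
  exists N, forall n, (N <= n)%N -> d x (trunc n x) < e.
Proof.
move=> x_sum e e0; have [N HN] := limn_series_sub_lt x_sum e0.
by exists N => n Nn; exact: le_lt_trans (l1dist_trunc_le n x_sum) (HN n Nn).
Qed.

Lemma Mi0 i : Mi i (0 : R).
Proof. by exists 0%N; rewrite mul0r. Qed.

Lemma Mset_abs_summable : @Mset R `<=` @abs_summable R.
Proof. by move=> x []. Qed.

Lemma Mset0 : Mset seq0.
Proof. by split; [exact: Mi0 | apply: (@abs_summable_finite_support _ 0)]. Qed.

Lemma Mset_trunc x n : Mset x -> Mset (trunc n x).
Proof.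
move=> [xM _]; split.
  by move=> i; rewrite /trunc; case: ifP => _ //; exact: Mi0.
by apply: (@abs_summable_finite_support _ n) => i ni; rewrite /trunc ltnNge ni.
Qed.

Definition dyadic_seq (s : seq nat) : seqR R :=
  fun i => (minn (nth 0%N s i) (2 ^ i))%:R / 2 ^+ i.

Lemma Mset_dyadic_seq s : Mset (dyadic_seq s).
Proof.
split; first by move=> i; exists (minn (nth 0%N s i) (2 ^ i)); rewrite geq_minr.
apply: (@abs_summable_finite_support _ (size s)) => i si.
by rewrite /dyadic_seq nth_default // min0n mul0r.
Qed.

Lemma trunc_dyadic_seq x n : Mset x -> exists s, trunc n x = dyadic_seq s.
Proof.
move=> [/choice[J xJ] _]; exists (mkseq J n); apply: funext => i.
rewrite /trunc /dyadic_seq; case: ifP => ilt.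
  by rewrite nth_mkseq //; have [Ji ->] := xJ i; rewrite (minn_idPl Ji).
by rewrite nth_default ?min0n ?mul0r // size_mkseq leqNgt ilt.
Qed.

Lemma separable_Mset : separable_in (@Mset R) d.
Proof.
exists (range dyadic_seq).
  split; last by move=> _ [s _ <-]; exact: Mset_dyadic_seq.
  exact: (sub_countable (card_image_le dyadic_seq setT) (countableP _)).
move=> U [UM U_open] [x Ux].
have xM := UM x Ux; have [e e0 xeU] := U_open x Ux.
have [N HN] := l1dist_trunc (Mset_abs_summable xM) e0.
exists (trunc N x); split; first by apply: xeU; [exact: Mset_trunc | exact: HN].
by have [s ->] := trunc_dyadic_seq N xM; exists s.
Qed.

Definition l1cauchy (u : nat -> seqR R) := forall e : R, 0 < e ->
  exists N, forall m n, (N <= m)%N -> (N <= n)%N -> d (u m) (u n) < e.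

Lemma l1cauchy_series_close u l : (forall n, abs_summable (u n)) -> l1cauchy u ->
    (forall i, exists Ni, forall n, (Ni <= n)%N -> u n i = l i) ->
  forall e : R, 0 < e ->
  exists N, forall n, (N <= n)%N -> forall K, series (fun i => `|u n i - l i|) K <= e.
Proof.
move=> u_sum u_cauchy /choice[Nc ul] e e0.
have [N HN] := u_cauchy e e0; exists N => n Nn K.
pose m := (N + \max_(j < K) Nc j)%N.
rewrite (_ : series _ K = series (fun i => `|u n i - u m i|) K).
  by apply/ltW/le_lt_trans/(HN n m Nn (leq_addr _ _)); exact: series_le_l1dist.
rewrite !seriesE; apply: eq_big_nat => i /andP[_ iK]; rewrite [u m i]ul //.
exact: leq_trans (leq_bigmax (F := fun j : 'I_K => Nc j) (Ordinal iK)) (leq_addl _ _).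
Qed.

Lemma l1cauchy_coord_lim u l : (forall n, abs_summable (u n)) -> l1cauchy u ->
    (forall i, exists Ni, forall n, (Ni <= n)%N -> u n i = l i) ->
  abs_summable l /\
  forall e : R, 0 < e -> exists N, forall n, (N <= n)%N -> d (u n) l < e.
Proof.
move=> u_sum u_cauchy ul; have close := l1cauchy_series_close u_sum u_cauchy ul.
split.
  have [N HN] := close 1 ltr01.
  apply: (@abs_summable_bounded _ (limn (series (fun i => `|u N i|)) + 1)) => K.
  apply: le_trans (ler_series (b := fun i => `|u N i| + `|u N i - l i|) _ _) _.
    by move=> i; rewrite -{1}(subKr (u N i) (l i)) ler_normB.
  by rewrite seriesD lerD ?series_norm_le_limn // HN.
move=> e e0; have e2 : 0 < e / 2 by lra.
have [N HN] := close _ e2.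
by exists N => n Nn; apply: le_lt_trans (l1dist_le (HN n Nn)) _; lra.
Qed.

Lemma Mi_dist_lt_eq i (a b : R) : Mi i a -> Mi i b -> `|a - b| < 2 ^- i -> a = b.
Proof.
have nat_dist_ge1 m n : (m < n)%N -> 1 <= `|m%:R - n%:R : R|.
  by move=> mn; rewrite distrC -natrB ?(ltnW mn) // normr_nat ler1n subn_gt0.
move=> [j [_ ->]] [k [_ ->]].
rewrite -mulrBl normrM [`|_^-1|]ger0_norm ?invr_ge0 ?exprn_ge0 // gtr_pMl ?invr_gt0 ?exprn_gt0 //.
case: (ltngtP j k) => [jk|kj|-> //] jk1.
  by have := nat_dist_ge1 _ _ jk; rewrite leNgt jk1.
by have := nat_dist_ge1 _ _ kj; rewrite distrC leNgt jk1.
Qed.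

Lemma l1cauchy_Mset_coord_stable u : (forall n, Mset (u n)) -> l1cauchy u ->
  forall i, exists Ni, forall n, (Ni <= n)%N -> u n i = u Ni i.
Proof.
move=> uM u_cauchy i; have [N HN] : exists N, forall m n, (N <= m)%N -> (N <= n)%N ->
    d (u m) (u n) < 2 ^- i by apply: u_cauchy; rewrite invr_gt0 exprn_gt0.
exists N => n Nn; apply: (Mi_dist_lt_eq ((uM n).1 i) ((uM N).1 i)).
apply: le_lt_trans (HN n N Nn (leqnn _)).
exact: coord_le_l1dist (Mset_abs_summable (uM n)) (Mset_abs_summable (uM N)).
Qed.

Lemma complete_Mset : complete_on (@Mset R) d.
Proof.
move=> u uM u_cauchy.
have /choice[N uN] := l1cauchy_Mset_coord_stable uM u_cauchy.
pose l : seqR R := fun i => u (N i) i.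
have [l_sum ul] : abs_summable l /\ _ :=
  l1cauchy_coord_lim (fun n => Mset_abs_summable (uM n)) u_cauchy
    (fun i => ex_intro _ (N i) (uN i)).
by exists l => //; split=> // i; exact: (uM (N i)).1.
Qed.

Lemma polish_Mset : polish_in (@Mset R) d.
Proof.
split; first exact: separable_Mset.
exists d; split; first exact: metric_on_l1dist Mset_abs_summable.
by split; [exact: complete_Mset |].
Qed.

Definition set_coord y n (j : nat) : seqR R :=
  fun i => if i == n then j%:R / 2 ^+ n else y i.

Definition unit_ball : set (seqR R) := [set x | Mset x /\ d seq0 x < 1].

Lemma Mset_set_coord y n j : Mset y -> (j <= 2 ^ n)%N -> Mset (set_coord y n j).
Proof.
move=> [yM y_sum] jn; split.
  by move=> i; rewrite /set_coord; case: eqP => [->|_]; [exists j | exact: yM].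
pose t i : R := if i == n then 1 else 0.
apply: (@abs_summable_bounded _ (limn (series (fun i => `|y i|)) + 1)) => K.
apply: le_trans (ler_series (b := fun i => `|y i| + t i) _ _) _.
  move=> i; rewrite /set_coord /t; case: eqP => _; last by rewrite addr0.
  rewrite ger0_norm ?divr_ge0 ?exprn_ge0 // ler_wpDl // ler_pdivrMr ?exprn_gt0 //.
  by rewrite mul1r -natrX ler_nat.
have t_supp i : i != n -> t i = 0 by rewrite /t => /negbTE ->.
have t_ge0 i : 0 <= t i by rewrite /t; case: ifP.
rewrite seriesD lerD ?series_norm_le_limn //.
by apply: le_trans (series_supported_le K t_supp t_ge0) _; rewrite /t eqxx.
Qed.

Lemma l1dist_set_coordS y n j : d (set_coord y n j) (set_coord y n j.+1) <= 2 ^- n.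
Proof.
apply: l1dist_le => K; apply: le_trans (series_supported_le (n := n) K _ _) _.
- by move=> i /negbTE ni; rewrite /set_coord ni subrr normr0.
- by move=> i; exact: normr_ge0.
rewrite /set_coord eqxx -mulrBl normrM distrC -natrB // subSnn normr1 mul1r.
by rewrite ger0_norm // invr_ge0 exprn_ge0.
Qed.

Lemma set_coord0 y n : y n = 0 -> set_coord y n 0 = y.
Proof. by move=> yn0; apply: funext => i; rewrite /set_coord mul0r; case: eqP => // ->. Qed.

Lemma set_coord_max_notin_unit_ball y n : ~ unit_ball (set_coord y n (2 ^ n)).
Proof.
move=> [yM]; have := coord_le_l1dist0 n (Mset_abs_summable yM).
by rewrite /set_coord eqxx natrX divff ?normr1 ?expf_neq0 ?pnatr_eq0 // => /le_lt_trans/[apply]; rewrite ltxx.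
Qed.

Lemma unit_ball0 : unit_ball seq0.
Proof. by split; [exact: Mset0 | rewrite l1dist_xx]. Qed.

Lemma open_unit_ball : open_in (@Mset R) d unit_ball.
Proof.
split=> [x [] //|x [xM x1]]; exists (1 - d seq0 x); first by rewrite subr_gt0.
move=> y yM dxy; split=> //.
have := l1dist_triangle (Mset_abs_summable Mset0) (Mset_abs_summable xM) (Mset_abs_summable yM).
lra.
Qed.

Definition last_step_in (C : set (seqR R)) y n j :=
  [/\ (j < 2 ^ n)%N, C (set_coord y n j) & ~ C (set_coord y n j.+1)].

Section NoClopenInUnitBall.
Variable C : set (seqR R).
Hypotheses (C_clopen : clopen_in (@Mset R) d C) (C0 : C seq0) (C_ball : C `<=` unit_ball).

Lemma clopen_last_coord n y : C y -> y n = 0 -> exists j, last_step_in C y n j.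
Proof.
move=> Cy yn0; apply: last_true_before (fun j => C (set_coord y n j)) _ _ _.
  by rewrite set_coord0.
by move/C_ball; exact: set_coord_max_notin_unit_ball.
Qed.

Variable J : nat -> seqR R -> nat.
Hypothesis J_last : forall n y, C y -> y n = 0 -> last_step_in C y n (J n y).

Fixpoint greedy n : seqR R :=
  if n is n'.+1 then set_coord (greedy n') n' (J n' (greedy n')) else seq0.

Lemma greedy_inv n : C (greedy n) /\ forall i, (n <= i)%N -> greedy n i = 0.
Proof.
elim: n => [|n [Cg g0]] //=; have [_ C_next _] := J_last Cg (g0 n (leqnn n)).
split=> // i ni; rewrite /set_coord (gtn_eqF ni) g0 //; exact: ltnW.
Qed.

Lemma Mset_greedy n : Mset (greedy n).
Proof. by have [/C_ball[]] := greedy_inv n. Qed.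

Definition greedy_lim : seqR R := fun i => greedy i.+1 i.

Lemma greedy_trunc n : greedy n = trunc n greedy_lim.
Proof.
elim: n => [|n IHn]; apply: funext => i; rewrite /trunc //=.
rewrite /greedy_lim ltnS leq_eqVlt {1}/set_coord; case: eqP => [->|_] /=.
  by rewrite /set_coord eqxx.
by rewrite IHn /trunc /greedy_lim.
Qed.

Lemma Mset_greedy_lim : Mset greedy_lim.
Proof.
split=> [i|]; first exact: (Mset_greedy i.+1).1.
apply: (@abs_summable_bounded _ 1) => K; apply/ltW/le_lt_trans/(C_ball (greedy_inv K).1).2.
rewrite (_ : series _ K = series (fun i => `|seq0 i - greedy K i|) K).
  exact: series_le_l1dist (Mset_abs_summable Mset0) (Mset_abs_summable (Mset_greedy K)).
rewrite !seriesE; apply: eq_big_nat => i /andP[_ iK].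
by rewrite greedy_trunc /trunc iK /seq0 sub0r normrN.
Qed.

Lemma C_greedy_lim : C greedy_lim.
Proof.
apply: contrapT => NC; have [_ [_ [_ NC_open]]] := C_clopen.
have [e e0 NCe] := NC_open _ (conj Mset_greedy_lim NC).
have [N HN] := l1dist_trunc (Mset_abs_summable Mset_greedy_lim) e0.
have [_ []] := NCe _ (Mset_trunc N Mset_greedy_lim) (HN N (leqnn N)).
by rewrite -greedy_trunc; exact: (greedy_inv N).1.
Qed.

Lemma no_clopen_in_unit_ball : False.
Proof.
have [[_ C_open] _] := C_clopen; have [e e0 Ce] := C_open _ C_greedy_lim.
have e2 : 0 < e / 2 by lra.
have [N HN] := l1dist_trunc (Mset_abs_summable Mset_greedy_lim) e2.
have [N' HN'] : exists N', forall n, (N' <= n)%N -> 2 ^- n < e / 2.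
  have [N' _ HN'] := near_infty_natSinv_expn_lt (PosNum e2).
  by exists N' => n N'n; rewrite -div1r; exact: HN'.
pose n := maxn N N'; pose y := greedy n.
have [Cy y0] := greedy_inv n; have [Jn _ NC] := J_last Cy (y0 n (leqnn n)).
apply: NC; apply: Ce; first exact: Mset_set_coord (Mset_greedy n) Jn.
have d1 : d greedy_lim (greedy n.+1) < e / 2.
  by rewrite greedy_trunc; apply: HN; exact: leq_trans (leq_maxl N N') (leqnSn n).
have d2 : d (greedy n.+1) (set_coord y n (J n y).+1) < e / 2.
  by apply: le_lt_trans (l1dist_set_coordS _ _ _) (HN' _ (leq_maxr N N')).
have := l1dist_triangle (Mset_abs_summable Mset_greedy_lim)
  (Mset_abs_summable (Mset_greedy n.+1)) (Mset_abs_summable (Mset_set_coord (Mset_greedy n) Jn)).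
lra.
Qed.

End NoClopenInUnitBall.

Lemma not_clopen_in_unit_ball C :
  clopen_in (@Mset R) d C -> C seq0 -> ~ C `<=` unit_ball.
Proof.
move=> C_clopen C0 C_ball.
have step n y : exists j, C y -> y n = 0 -> last_step_in C y n j.
  case: (pselect (C y /\ y n = 0)) => [[Cy yn0]|NCy]; last by exists 0%N => Cy yn0; case: NCy.
  by have [j Pj] := clopen_last_coord C_ball Cy yn0; exists j.
exact: (no_clopen_in_unit_ball C_clopen C0 C_ball (fun n => projT2 (choice (step n)))).
Qed.

Lemma not_zero_dimensional_Mset : ~ zero_dimensional_in (@Mset R) d.
Proof.
move=> zd; have [C [C_clopen [C0 C_ball]]] := zd _ _ open_unit_ball unit_ball0.
exact: not_clopen_in_unit_ball C_clopen C0 C_ball.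
Qed.

Definition unit_ball_bump x : R := Num.max 0 (1 - d seq0 x).

Lemma continuous_on_unit_ball_bump : continuous_on (@Mset R) d unit_ball_bump.
Proof.
move=> x xM e e0; exists e => // y yM dxy; apply: le_lt_trans (ler_dist_max0 _ _) _.
rewrite opprB addrC subrKA distrC.
apply: le_lt_trans (l1dist_lipschitz (Mset_abs_summable yM) (Mset_abs_summable xM)
  (Mset_abs_summable Mset0)) _.
by rewrite l1dist_sym.
Qed.

Lemma functionally_closed_unit_ball_compl :
  functionally_closed_in (@Mset R) d (@Mset R `\` unit_ball).
Proof.
exists unit_ball_bump; split; first exact: continuous_on_unit_ball_bump.
rewrite /unit_ball_bump; split=> [x xM|].
  have d_ge0 := le_trans (normr_ge0 _) (coord_le_l1dist0 0 (Mset_abs_summable xM)).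
  by rewrite maxEle; case: (leP 0 (1 - d seq0 x)) => ?; apply/andP; split; lra.
apply/seteqP; split=> x [xM] /=; rewrite maxEle.
  move=> Nx; have : 1 <= d seq0 x by rewrite leNgt; apply/negP => ?; exact: Nx.
  by split=> //; case: (leP 0 (1 - d seq0 x)) => ? //; lra.
by move=> b0; split=> // -[_]; move: b0; case: (leP 0 (1 - d seq0 x)) => ?; lra.
Qed.

Lemma not_normann_Mset : ~ normann_condition_in (@Mset R) d.
Proof.
move=> normann; have [F [F_clopen ballC_eq]] := normann _ functionally_closed_unit_ball_compl.
have [C [FC NC0]] : exists C, F C /\ ~ C seq0.
  apply: contrapT => /forallNP allC.
  suff : (@Mset R `\` unit_ball) seq0 by case=> _ /(_ unit_ball0).
  rewrite ballC_eq; split=> [|C FC]; first exact: Mset0.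
  by apply: contrapT => NC; exact: allC C (conj FC NC).
have [C_open [_ NC_open]] := F_clopen C FC.
apply: (@not_clopen_in_unit_ball (@Mset R `\` C)).
- split=> //; split=> [x [] //|]; rewrite setDD setIidr //; exact: C_open.1.
- by split=> //; exact: Mset0.
move=> x [xM NCx]; apply: contrapT => Nx.
suff : (@Mset R `\` unit_ball) x by rewrite ballC_eq => -[_ /(_ C FC)].
by split.
Qed.
End L1Metric.

Theorem lemma2p3 (R : realType) :
  polish_in (@Mset R) (@l1dist R) /\
  ~ zero_dimensional_in (@Mset R) (@l1dist R) /\
  ~ normann_condition_in (@Mset R) (@l1dist R).
Proof.
split; first exact: polish_Mset.
by split; [exact: not_zero_dimensional_Mset | exact: not_normann_Mset].
Qed.
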